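(* There are infinitely many odd positive integers $N$ for which there are no palindromic numbers $A,B$ with $N=A/B$.
   Context: A positive integer $n$ is palindromic if its binary representation (most significant digit first, no leading zeros) reads the same forwards and backwards. *)

From mathcomp Require Import all_boot.
Set Implicit Arguments. Unset Strict Implicit. Unset Printing Implicit Defensive.

(* Binary digits of n, least significant first, no leading zeros
   (bits 0 = [::]). Fuel n suffices since n halves each step. *)
Fixpoint bits_aux (fuel n : nat) : seq bool :=
  match fuel with
  | 0 => [::]
  | f.+1 => if n == 0 then [::] else odd n :: bits_aux f n./2
  end.
Definition bits (n : nat) : seq bool := bits_aux n n.

Definition palindromic (n : nat) : bool := (0 < n) && (rev (bits n) == bits n).

From mathcomp Require Import all_boot zify.

Set Implicit Arguments.
Unset Strict Implicit.
Unset Printing Implicit Defensive.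

(* Let N = 2^k + 3 with k >= 5 and suppose A = N B for binary palindromes A, B.
   Modulo 8 we have A = 3 B, which flips bit 1 and keeps bit 2 of the odd
   number B.  Reading a palindrome backwards, bits 1 and 2 are also its second
   and third leading bits, so the leading three bits of A and B, as numbers in
   [4, 8), differ by 2.  But A = 2^k B + 3 B, and 3 B is too small to move the
   leading three bits of 2^k B by more than a carry of 1. *)

Definition bitn (n i : nat) : bool := odd (n %/ 2 ^ i).

Lemma bitn0 n : bitn n 0 = odd n.
Proof. by rewrite /bitn expn0 divn1. Qed.

Lemma bitn_div n m i : bitn (n %/ 2 ^ m) i = bitn n (m + i).
Proof. by rewrite /bitn expnD divnMA. Qed.

Lemma bitn_addl k x y i : i < k -> bitn (2 ^ k * x + y) i = bitn y i.
Proof.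
move=> ltik; rewrite /bitn -(subnKC (ltnW ltik)) expnD -mulnA mulnC.
rewrite divnMDl ?expn_gt0 //.
by rewrite oddD oddM oddX subn_eq0 leqNgt ltik.
Qed.

Lemma nth_bits_aux f n i : n <= f -> nth false (bits_aux f n) i = bitn n i.
Proof.
elim: f n i => [|f IH] n i /=.
  by rewrite leqn0 => /eqP ->; rewrite nth_nil /bitn div0n.
move=> le_nf; have [->|n_gt0] := posnP n; first by rewrite nth_nil /bitn div0n.
case: i => [|i] /=; first by rewrite bitn0.
rewrite IH -?divn2; last by lia.
by rewrite -(bitn_div n 1) expn1.
Qed.

Lemma nth_bits n i : nth false (bits n) i = bitn n i.
Proof. exact: nth_bits_aux. Qed.

Lemma size_bits_aux f n : 0 < n <= f -> size (bits_aux f n) = (trunc_log 2 n).+1.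
Proof.
elim: f n => [|f IH] n /=; first by lia.
move=> /andP[n_gt0 le_nf]; rewrite eqn0Ngt n_gt0 /=.
have [n_le1|n_gt1] := leqP n 1.
  have -> : n = 1 by lia.
  by rewrite trunc_log1; case: (f).
rewrite IH; last by apply/andP; split; lia.
by rewrite [in RHS]trunc_log2S.
Qed.

Lemma size_bits n : 0 < n -> size (bits n) = (trunc_log 2 n).+1.
Proof. by move=> n_gt0; rewrite size_bits_aux // n_gt0 leqnn. Qed.

Lemma bitn_trunc_log n : 0 < n -> bitn n (trunc_log 2 n).
Proof.
rewrite /bitn => n_gt0; suff -> : n %/ 2 ^ trunc_log 2 n = 1 by [].
apply/eqP; rewrite eqn_leq -ltnS ltn_divLR ?leq_divRL ?expn_gt0 // mul1n.
by rewrite trunc_logP // -expnS trunc_log_ltn.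
Qed.

Lemma bitn_mod x k i : i < k -> bitn (x %% 2 ^ k) i = bitn x i.
Proof. by move=> ltik; rewrite [in RHS](divn_eq x (2 ^ k)) mulnC bitn_addl. Qed.

Lemma bitn_mul3 B : odd B -> bitn (3 * B) 1 = ~~ bitn B 1 /\ bitn (3 * B) 2 = bitn B 2.
Proof.
move=> oB; have bitn_mod8 x i : i < 3 -> bitn x i = bitn (x %% 8) i.
  by move=> lt_i3; rewrite (bitn_mod x lt_i3).
rewrite [bitn (3 * B) 1]bitn_mod8 // [bitn (3 * B) 2]bitn_mod8 //.
rewrite [bitn B 1]bitn_mod8 // [bitn B 2]bitn_mod8 // -modnMmr.
have : odd (B %% 8) by rewrite odd_mod.
have : B %% 8 < 8 by rewrite ltn_mod.
by case: (B %% 8) => [|[|[|[|[|[|[|[|]]]]]]]].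
Qed.

Lemma palindromic_bitnE X i : palindromic X -> i <= trunc_log 2 X ->
  bitn X i = bitn X (trunc_log 2 X - i).
Proof.
case/andP=> X_gt0 /eqP rev_bits le_i.
by rewrite -!nth_bits -{1}rev_bits nth_rev size_bits ?ltnS.
Qed.

Lemma palindromic_odd X : palindromic X -> odd X.
Proof.
move=> pX; have X_gt0 : 0 < X by case/andP: pX.
by rewrite -bitn0 palindromic_bitnE // subn0 bitn_trunc_log.
Qed.

Lemma three_bitsE L : 4 <= L < 8 -> L = 4 + 2 * bitn L 1 + bitn L 0.
Proof. by rewrite /bitn expn1 expn0 divn1 -!modn2; lia. Qed.

(* The three leading binary digits of [n], padded with zeros when [n < 4]. *)
Definition lead3 (n : nat) : nat := n * 4 %/ 2 ^ trunc_log 2 n.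

Lemma lead3_bounds n : 0 < n -> 4 <= lead3 n < 8.
Proof.
move=> n_gt0; have lo := trunc_logP (isT : 1 < 2) n_gt0.
have := trunc_log_ltn n (isT : 1 < 2); rewrite expnS => hi.
rewrite /lead3 leq_divRL ?ltn_divLR ?expn_gt0 //.
by move: (2 ^ _) lo hi => P; lia.
Qed.

Lemma lead3_eq n m L : 4 <= L < 8 -> L * 2 ^ m <= n * 4 < L.+1 * 2 ^ m -> lead3 n = L.
Proof.
move=> /andP[L_ge4 L_lt8] /andP[lo hi]; have pow_gt0 : 0 < 2 ^ m by rewrite expn_gt0.
rewrite /lead3; have -> : trunc_log 2 n = m.
  apply: trunc_log_eq => //; rewrite expnS.
  have : 4 * 2 ^ m <= L * 2 ^ m by rewrite leq_mul2r L_ge4 orbT.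
  have : L.+1 * 2 ^ m <= 8 * 2 ^ m by rewrite leq_mul2r L_lt8 orbT.
  by lia.
apply/eqP; rewrite eqn_leq leq_divRL // lo andbT.
by rewrite -ltnS ltn_divLR.
Qed.

Lemma lead3_palindromic X : palindromic X -> lead3 X = 4 + 2 * bitn X 1 + bitn X 2.
Proof.
move=> pX; have X_gt0 : 0 < X by case/andP: pX.
have [t_lt2 | t_ge2] := ltnP (trunc_log 2 X) 2.
  have : X < 4.
    apply: leq_trans (trunc_log_ltn X (isT : 1 < 2)) _.
    by rewrite (_ : 4 = 2 ^ 2) // leq_exp2l.
  by case: X pX {X_gt0 t_lt2} => [|[|[|[|]]]].
set t := trunc_log 2 X in t_ge2 *.
have lead3E : lead3 X = X %/ 2 ^ (t - 2).
  rewrite /lead3 -/t -{1}(subnKC t_ge2) expnD.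
  by rewrite [X * 4]mulnC divnMl.
have L_bounds := lead3_bounds X_gt0; rewrite lead3E in L_bounds *.
rewrite {1}(three_bitsE L_bounds) !bitn_div addn0.
rewrite [bitn X 1](palindromic_bitnE pX) -/t; last by lia.
rewrite [bitn X 2](palindromic_bitnE pX) -/t; last by lia.
by rewrite (_ : t - 2 + 1 = t - 1) //; lia.
Qed.

(* Working modulo 4 absorbs the carry 111 -> 1000. *)
Lemma lead3_shift_add k c B : 0 < B -> 8 * c <= 2 ^ k ->
  lead3 (2 ^ k * B + c * B) = lead3 B %[mod 4] \/
  lead3 (2 ^ k * B + c * B) = (lead3 B).+1 %[mod 4].
Proof.
move=> B_gt0 c_small; set A := 2 ^ k * B + c * B.
set t := trunc_log 2 B; set T := lead3 B; set M := 2 ^ (k + t).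
have /andP[T_ge4 T_lt8] : 4 <= T < 8 := lead3_bounds B_gt0.
have pow_gt0 : 0 < 2 ^ t by rewrite expn_gt0.
have T_lo : T * 2 ^ t <= B * 4 := leq_divM _ _.
have T_hi : B * 4 < T.+1 * 2 ^ t := ltn_ceil _ pow_gt0.
have B_lt : B < 2 * 2 ^ t by rewrite -expnS trunc_log_ltn.
have cB_le : c * B * 4 <= M.
  have : c * B <= c * (2 * 2 ^ t) := leq_mul (leqnn c) (ltnW B_lt).
  have : 8 * c * 2 ^ t <= 2 ^ k * 2 ^ t := leq_mul c_small (leqnn _).
  by rewrite /M expnD; lia.
have A_lo : T * M <= A * 4.
  have : 2 ^ k * (T * 2 ^ t) <= 2 ^ k * (B * 4) := leq_mul (leqnn _) T_lo.
  by rewrite /M expnD; lia.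
have A_hi : A * 4 < T.+2 * M.
  have : 2 ^ k * (B * 4) < 2 ^ k * (T.+1 * 2 ^ t) by rewrite ltn_pmul2l ?expn_gt0.
  by move: cB_le; rewrite /M expnD; lia.
have [A_lt | A_ge] := ltnP (A * 4) (T.+1 * M).
  by left; rewrite (@lead3_eq A (k + t) T) -/M //; lia.
have [T_lt7 | T_ge7] := ltnP T 7.
  by right; rewrite (@lead3_eq A (k + t) T.+1) -/M //; lia.
right; rewrite (@lead3_eq A (k + t).+1 4) //; first by lia.
have T_eq7 : T = 7 by lia.
by move: A_ge A_hi; rewrite expnS -/M T_eq7; lia.
Qed.

Theorem theorem8 :
  forall m : nat, exists N : nat,
    m < N /\ odd N /\
    ~ (exists A B : nat, palindromic A /\ palindromic B /\ A = N * B).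
Proof.
move=> m; set k := m + 5; exists (2 ^ k + 3); split; last split.
- by have := ltn_expl k (isT : 1 < 2); lia.
- by rewrite oddD oddX /k addnS.
move=> [A [B [pA [pB eAB]]]]; have B_gt0 : 0 < B by case/andP: pB.
have [bit1_3B bit2_3B] := bitn_mul3 (palindromic_odd pB).
have low_bitsA i : i < 3 -> bitn A i = bitn (3 * B) i.
  by move=> lt_i3; rewrite eAB mulnDl bitn_addl //; lia.
have c_small : 8 * 3 <= 2 ^ k.
  by apply: leq_trans (_ : 2 ^ 5 <= _); rewrite ?leq_exp2l ?leq_addl.
have := lead3_shift_add B_gt0 c_small.
rewrite -mulnDl -eAB !lead3_palindromic // !low_bitsA // bit1_3B bit2_3B.
by case: (bitn B 1); case: (bitn B 2) => [] [].
Qed.
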